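(* Let $f:\mathbb{R}^n\to\mathbb{R}$ be convex and continuously differentiable, let $w^*\in\Delta^n$ be a minimizer of $f$ over $\Delta^n$, and let $t\mapsto w^t$ be continuously differentiable in $t$ and satisfy the Cauchy-Simplex gradient flow $$\frac{dw^t}{dt} = -\beta\, w^t\odot\Big(\nabla f(w^t) - \big(w^t\cdot\nabla f(w^t)\big)\mathbb{1}\Big)$$ for a constant $\beta>0$. Then, as long as $w^t\in\operatorname{int}(\Delta^n)$, the relative entropy $$D(w^*\,|\,w^t)=\sum_{i:\,w^*_i\neq 0} w^*_i\log\!\left(\frac{w^*_i}{w^t_i}\right)$$ is a decreasing (non-increasing) function of time.
   Context: $\Delta^n=\{w\in\mathbb{R}^n : \sum_i w_i=1,\ w_i\ge 0\}$ is the probability simplex and $\operatorname{int}(\Delta^n)$ denotes the points of $\Delta^n$ with all coordinates strictly positive. $\odot$ denotes componentwise multiplication and $\mathbb{1}$ the all-ones vector. *)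

From HB Require Import structures.
From mathcomp Require Import all_boot all_order all_algebra.
From mathcomp Require Import all_classical all_reals all_analysis.
Set Implicit Arguments. Unset Strict Implicit. Unset Printing Implicit Defensive.
Import Order.TTheory GRing.Theory Num.Theory.
Import numFieldNormedType.Exports.
Local Open Scope ring_scope.

(* Vectors of R^n are row vectors 'rV[R]_n; coordinate i of w is w 0 i. *)

Definition basis_vec (R : realType) (n : nat) (i : 'I_n) : 'rV[R]_n :=
  delta_mx 0 i.

Definition grad (R : realType) (n : nat) (f : 'rV[R]_n -> R) (x : 'rV[R]_n)
  : 'rV[R]_n := \row_i ('D_(basis_vec R i) f x).

Definition C1_fun (R : realType) (n : nat) (f : 'rV[R]_n -> R) : Prop :=
  (forall x, differentiable f x) /\ continuous (grad f).

Definition convex_fun (R : realType) (n : nat) (f : 'rV[R]_n -> R) : Prop :=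
  forall (x y : 'rV[R]_n) (l : R), 0 <= l <= 1 ->
    f (l *: x + (1 - l) *: y) <= l * f x + (1 - l) * f y.

Definition in_simplex (R : realType) (n : nat) (w : 'rV[R]_n) : Prop :=
  (\sum_i w 0 i = 1) /\ (forall i, 0 <= w 0 i).

Definition in_int_simplex (R : realType) (n : nat) (w : 'rV[R]_n) : Prop :=
  (\sum_i w 0 i = 1) /\ (forall i, 0 < w 0 i).

Definition dotv (R : realType) (n : nat) (u v : 'rV[R]_n) : R :=
  \sum_i u 0 i * v 0 i.

Definition rel_entropy (R : realType) (n : nat) (ws w : 'rV[R]_n) : R :=
  \sum_(i | ws 0 i != 0) ws 0 i * ln (ws 0 i / w 0 i).

Definition cs_field (R : realType) (n : nat) (beta : R) (f : 'rV[R]_n -> R)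
  (w : 'rV[R]_n) : 'rV[R]_n :=
  \row_i (- beta * (w 0 i * (grad f w 0 i - dotv w (grad f w)))).

From HB Require Import structures.
From mathcomp Require Import all_boot all_order all_algebra.
From mathcomp Require Import all_classical all_reals all_analysis.
From mathcomp Require Import ring lra.
Import Order.TTheory GRing.Theory Num.Theory.
Import numFieldNormedType.Exports.
Local Open Scope ring_scope.
Local Open Scope classical_set_scope.

(* Along the flow, d/dt D(w*|w) = -sum_i w*_i (dw_i/dt) / w_i
   = beta <grad f w, w* - w>, because the normalising term w . grad f w
   gets weight sum_i w*_i = 1.  By the first-order characterisation of
   convexity, <grad f w, w* - w> <= f w* - f w, which is <= 0 since w*
   minimises f on the simplex. *)

Section relative_entropy_descent.
Variable R : realType.
Set Implicit Arguments.
Unset Strict Implicit.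

Lemma is_derive_mx_coord (V : normedModType R) (m n : nat)
    (M : V -> 'M[R]_(m, n)) (t v : V) (i : 'I_m) (j : 'I_n) :
  derivable M t v -> is_derive t v (fun x => M x i j) ('D_v M t i j).
Proof.
move=> dM; rewrite derive_mx // mxE; apply: derivableP.
exact: (derivable_mxP M t v).1 dM i j.
Qed.

Lemma is_derive_ln_div (g : R -> R) (u c dg : R) :
  0 < c -> 0 < g u -> is_derive u 1 g dg ->
  is_derive u 1 (fun y => ln (c / g y)) (- dg / g u).
Proof.
move=> c_gt0 gu_gt0 dgu.
have gu_neq0 := lt0r_neq0 gu_gt0.
pose q y := c / g y.
have dq : is_derive u 1 q (c *: (- (g u) ^- 2 *: dg)).
  exact: is_deriveZ (is_deriveV gu_neq0 dgu).
have qu_gt0 : 0 < q u by rewrite divr_gt0.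
apply: is_derive_eq (is_derive1_comp (is_derive1_ln qu_gt0) dq) _.
rewrite /q /GRing.scale /=; field.
by rewrite gu_neq0 (lt0r_neq0 c_gt0).
Qed.

Lemma derive_dotv_grad (n : nat) (f : 'rV[R]_n -> R) x v :
  differentiable f x -> 'D_v f x = dotv (grad f x) v.
Proof.
move=> df; rewrite deriveE // {1}(row_sum_delta v) linear_sum /dotv.
by apply: eq_bigr => j _; rewrite linearZ /= mxE -deriveE // mulrC.
Qed.

Lemma convex_derive_le (n : nat) (f : 'rV[R]_n -> R) x v :
  convex_fun f -> derivable f x v -> 'D_v f x <= f (x + v) - f x.
Proof.
move=> cf dfxv.
apply: (closed_cvg _ (@closed_le R (f (x + v) - f x)) _ _
  (cvg_dnbhs_at_right dfxv)).
near=> h.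
have h_gt0 : 0 < h by near: h; exact: nbhs_right_gt.
have h_le1 : h <= 1 by near: h; exact: nbhs_right_le.
have chord : f (h *: v + x) <= h * f (x + v) + (1 - h) * f x.
  have -> : h *: v + x = h *: (x + v) + (1 - h) *: x.
    by rewrite scalerDr scalerBl scale1r [RHS]addrC addrA subrK addrC.
  by apply: cf; rewrite h_le1 ltW.
rewrite /= /shift /GRing.scale /= ler_pdivrMl // lerBlDr (le_trans chord) //.
nra.
Unshelve. all: by end_near.
Qed.

Lemma convex_grad_le (n : nat) (f : 'rV[R]_n -> R) x y :
  convex_fun f -> differentiable f x ->
  dotv (grad f x) (y - x) <= f y - f x.
Proof.
move=> cf dfx; rewrite -derive_dotv_grad //.
have := convex_derive_le (v := y - x) cf (diff_derivable dfx).
by rewrite addrCA subrr addr0.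
Qed.

Lemma is_derive_rel_entropy (n : nat) (ws : 'rV[R]_n)
    (w : R -> 'rV[R]_n) (u : R) :
  (forall i, 0 <= ws 0 i) -> derivable w u 1 -> (forall i, 0 < w u 0 i) ->
  is_derive u 1 (fun y => rel_entropy ws (w y))
    (- \sum_i ws 0 i * w^`()%classic u 0 i / w u 0 i).
Proof.
move=> ws_ge0 dw w_gt0.
pose h i y := if ws 0 i != 0 then ws 0 i * ln (ws 0 i / w y 0 i) else 0.
have -> : (fun y => rel_entropy ws (w y)) = \sum_(i < n) h i.
  by rewrite fct_sumE; apply/funext => y; rewrite /rel_entropy big_mkcond.
rewrite -sumrN.
apply: is_derive_sum => i; rewrite /h.
have [ws_neq0|/negPn/eqP ->] := boolP (ws 0 i != 0); last first.
  by rewrite !mul0r oppr0; exact: is_derive_cst.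
have ws_gt0 : 0 < ws 0 i by rewrite lt_neqAle eq_sym ws_neq0 ws_ge0.
have dwi := is_derive_mx_coord 0 i dw; rewrite -derive1E in dwi.
have dterm : is_derive u 1 (fun y => ws 0 i * ln (ws 0 i / w y 0 i))
    (ws 0 i * (- w^`()%classic u 0 i / w u 0 i)).
  exact (is_deriveZ (ws 0 i) (is_derive_ln_div ws_gt0 (w_gt0 i) dwi)).
by apply: is_derive_eq dterm _; rewrite mulrA mulrN mulNr.
Qed.

Lemma cs_field_entropy_rate (n : nat) (beta : R)
    (f : 'rV[R]_n -> R) (ws x : 'rV[R]_n) :
  \sum_i ws 0 i = 1 -> (forall i, x 0 i != 0) ->
  - \sum_i ws 0 i * cs_field beta f x 0 i / x 0 i
    = beta * dotv (grad f x) (ws - x).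
Proof.
move=> ws_sum1 x_neq0.
set g := grad f x; set c := dotv x g.
have -> : dotv g (ws - x) = \sum_i ws 0 i * (g 0 i - c).
  under [RHS]eq_bigr do rewrite mulrBr.
  rewrite sumrB -mulr_suml ws_sum1 mul1r /c /dotv -sumrB.
  by apply: eq_bigr => i _; rewrite !mxE; ring.
rewrite -sumrN mulr_sumr; apply: eq_bigr => i _.
by rewrite /cs_field mxE -/g -/c; field; exact: x_neq0.
Qed.

Lemma simplex_minimizer_grad_le0 (n : nat)
    (f : 'rV[R]_n -> R) (ws x : 'rV[R]_n) :
  convex_fun f -> differentiable f x ->
  (forall v, in_simplex v -> f ws <= f v) -> in_simplex x ->
  dotv (grad f x) (ws - x) <= 0.
Proof.
move=> cf dfx ws_min x_simplex.
by rewrite (le_trans (convex_grad_le ws cf dfx)) // subr_le0 ws_min.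
Qed.

End relative_entropy_descent.

Theorem theorem4p2 (R : realType) (n : nat) (f : 'rV[R]_n -> R)
  (wstar : 'rV[R]_n) (w : R -> 'rV[R]_n) (beta a b : R) :
  convex_fun f -> C1_fun f ->
  in_simplex wstar -> (forall v, in_simplex v -> f wstar <= f v) ->
  0 < beta ->
  (forall t, a < t < b -> derivable w t 1) ->
  (forall t, a < t < b -> {for t, continuous (w^`())}) ->
  (forall t, a < t < b -> w^`() t = cs_field beta f (w t)) ->
  forall s t, a < s -> s <= t -> t < b ->
    (forall u, s <= u <= t -> in_int_simplex (w u)) ->
    rel_entropy wstar (w t) <= rel_entropy wstar (w s).
Proof.
move=> cf [df _] [ws_sum1 ws_ge0] ws_min beta_gt0 dw _ flow s t as_ st tb w_int.
pose D y := rel_entropy wstar (w y).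
pose rate u := beta * dotv (grad f (w u)) (wstar - w u).
have D_rate u : s <= u <= t -> is_derive u 1 D (rate u) /\ rate u <= 0.
  move=> sut; have /andP[su ut] := sut.
  have abu : a < u < b by rewrite (lt_le_trans as_ su) (le_lt_trans ut tb).
  have [wu_sum1 wu_gt0] := w_int u sut.
  have wu_neq0 i : w u 0 i != 0 := lt0r_neq0 (wu_gt0 i).
  split.
  - rewrite /rate -(cs_field_entropy_rate _ _ ws_sum1 wu_neq0) -flow //.
    exact: is_derive_rel_entropy ws_ge0 (dw u abu) wu_gt0.
  - rewrite /rate pmulr_rle0 //; apply: simplex_minimizer_grad_le0 => //.
    by split=> // i; exact: ltW.
have itv_cc u : u \in `]s, t[%R -> s <= u <= t.
  by rewrite in_itv /= => /andP[su ut]; rewrite !ltW.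
apply: (@ler0_derive1_le_cc R D s t).
- by move=> u /itv_cc /D_rate [dD _]; exact: ex_derive.
- by move=> u /itv_cc /D_rate [dD D_le0]; rewrite derive1E derive_val.
- apply: derivable_within_continuous => u; rewrite in_itv /=.
  by move=> /D_rate [dD _]; exact: ex_derive.
- by rewrite in_itv /= lexx st.
- by rewrite in_itv /= lexx st.
- exact: st.
Qed.
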